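(* Let $S$ be a finite poset containing a subposet (with induced order) isomorphic to $W^{2k}$ for some $k\ge2$, and suppose $f_S$ is positive semidefinite. Then $C(f_S)\ne\varnothing$.
   Context: $f_S(x)=\sum_i x_i^2+\sum_{s_i<s_j}x_ix_j$. $H_n=\{x:\sum x_i=0\}$; $C(f)$ is the set of $h\in H_n\setminus\{0\}$ with either all $\partial f/\partial x_i(h)\le0$ or all $\ge0$. $W^{2k}=\{s_1^-,\dots,s_k^-,s_1^+,\dots,s_k^+\}$ whose only strict relations are $s_i^-<s_i^+$ ($1\le i\le k$), $s_i^-<s_{i+1}^+$ ($1\le i\le k-1$), $s_k^-<s_1^+$. *)

From mathcomp Require Import all_boot all_order all_algebra.
From mathcomp Require Import reals.
From mathcomp Require Import mpoly.
Set Implicit Arguments. Unset Strict Implicit. Unset Printing Implicit Defensive.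
Import Order.TTheory GRing.Theory Num.Theory.
Local Open Scope ring_scope.

(* The elements of a finite poset S are enumerated s_0, ..., s_{n-1}
   (n = #|S|) via enum_val; variable x_i of f_S corresponds to s_i. *)

Definition fS (R : realType) (d : Order.disp_t) (S : finPOrderType d)
  : {mpoly R[#|S|]} :=
  \sum_(i < #|S|) 'X_i ^+ 2
  + \sum_(i < #|S|) \sum_(j < #|S| | (enum_val i < enum_val j)%O) 'X_i * 'X_j.

Definition psd (R : realType) (n : nat) (f : {mpoly R[n]}) : Prop :=
  forall x : 'I_n -> R, 0 <= f.@[x].

Definition inH (R : realType) (n : nat) (h : 'I_n -> R) : Prop :=
  \sum_(i < n) h i = 0.

Definition inC (R : realType) (n : nat) (f : {mpoly R[n]}) (h : 'I_n -> R) : Prop :=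
  [/\ inH h, (exists i, h i != 0) &
      (forall i : 'I_n, (f^`M(i)).@[h] <= 0) \/ (forall i : 'I_n, 0 <= (f^`M(i)).@[h])].

(* W^{2k}: elements (i, false) = s_{i+1}^-, (i, true) = s_{i+1}^+ (0-indexed i < k);
   strict relations s_i^- < s_i^+, s_i^- < s_{i+1}^+, s_k^- < s_1^+. *)
Definition W_lt (k : nat) : rel ('I_k * bool) :=
  fun a b => [&& ~~ a.2, b.2 & (b.1 == a.1) || (val b.1 == (val a.1).+1 %% k)%N].

Definition contains_W (d : Order.disp_t) (S : finPOrderType d) (k : nat) : Prop :=
  exists g : 'I_k * bool -> S,
    injective g /\ forall a b, (g a < g b)%O = W_lt a b.

From mathcomp Require Import all_boot all_order all_algebra.
From mathcomp Require Import reals.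
From mathcomp Require Import mpoly.
From mathcomp Require Import ring lra.
Set Implicit Arguments. Unset Strict Implicit. Unset Printing Implicit Defensive.
Import Order.TTheory GRing.Theory Num.Theory.
Local Open Scope ring_scope.

(* Let h be +1 on the lower elements s_i^- and -1 on the upper elements s_i^+
   of the copy of W^{2k} in S, and 0 elsewhere; then h is a nonzero point of
   H_n.  Each s_i^- lies below exactly s_i^+ and s_{i+1}^+, which are distinct
   because k >= 2, so f_S(h) = 2k - 2k = 0.  A positive semidefinite form
   vanishing at h is minimal there, hence all its partial derivatives vanish
   at h, and h lies in C(f_S). *)

Lemma mderivXU (R : nzRingType) (n : nat) (i m : 'I_n) :
  ('X_i : {mpoly R[n]})^`M(m) = (i == m)%:R%:MP.
Proof.
rewrite mderivX mnm1E; case: eqP => [->|_]; last by rewrite scale0r mpolyC0.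
have -> : (U_(m) - U_(m) = 0)%MM by apply/mnmP => j; rewrite mnmBE subnn mnm0E.
by rewrite mpolyX0 scale1r mpolyC1.
Qed.

Section GraphForm.
Variables (R : comNzRingType) (n : nat) (lt : rel 'I_n).

Definition graph_form : {mpoly R[n]} :=
  \sum_i 'X_i ^+ 2 + \sum_i \sum_(j | lt i j) 'X_i * 'X_j.

Definition deltav (m i : 'I_n) : R := (i == m)%:R.

Lemma meval_graph_form (x : 'I_n -> R) :
  graph_form.@[x] = \sum_i x i ^+ 2 + \sum_i \sum_(j | lt i j) x i * x j.
Proof.
rewrite mevalD !rmorph_sum; congr (_ + _); apply: eq_bigr => i _.
  by rewrite rmorphXn /= mevalXU.
by rewrite rmorph_sum; apply: eq_bigr => j _; rewrite rmorphM /= !mevalXU.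
Qed.

Lemma meval_mderiv_graph_form (m : 'I_n) (x : 'I_n -> R) :
  (graph_form^`M(m)).@[x] =
  \sum_i 2 * deltav m i * x i + \sum_i \sum_(j | lt i j) (deltav m i * x j + x i * deltav m j).
Proof.
have mderiv_sum := big_morph _ (mderivD m) (mderiv0 R m).
have meval_sum := big_morph _ (mevalD x) (meval0 x).
rewrite mderivD mevalD !mderiv_sum !meval_sum; congr (_ + _); apply: eq_bigr => i _.
  by rewrite expr2 mderivM mderivXU mevalD !mevalM mevalC mevalXU /deltav; ring.
rewrite mderiv_sum meval_sum; apply: eq_bigr => j _.
by rewrite mderivM !mderivXU mevalD !mevalM !mevalC !mevalXU.
Qed.

Lemma meval_graph_form_shift (m : 'I_n) (x : 'I_n -> R) (t : R) :
  graph_form.@[fun i => x i + t * deltav m i] =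
  graph_form.@[x] + t * (graph_form^`M(m)).@[x] + t ^+ 2 * graph_form.@[deltav m].
Proof.
rewrite !meval_graph_form meval_mderiv_graph_form.
have expand_sq i : (x i + t * deltav m i) ^+ 2 =
    x i ^+ 2 + t * (2 * deltav m i * x i) + t ^+ 2 * deltav m i ^+ 2 by ring.
have expand_mul i j : (x i + t * deltav m i) * (x j + t * deltav m j) =
    x i * x j + t * (deltav m i * x j + x i * deltav m j) + t ^+ 2 * (deltav m i * deltav m j).
  by ring.
under eq_bigr do rewrite expand_sq.
under [X in _ + X]eq_bigr do under eq_bigr do rewrite expand_mul.
have split_double_sum (F G H : 'I_n -> 'I_n -> R) :
  \sum_i \sum_(j | lt i j) (F i j + t * G i j + t ^+ 2 * H i j) =
  \sum_i \sum_(j | lt i j) F i j + t * \sum_i \sum_(j | lt i j) G i j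
  + t ^+ 2 * \sum_i \sum_(j | lt i j) H i j.
  by rewrite !mulr_sumr -!big_split; apply: eq_bigr => i _; rewrite !mulr_sumr -!big_split.
rewrite split_double_sum !big_split -!mulr_sumr /=; ring.
Qed.

End GraphForm.

Lemma quadratic_ge0_linear_coef_eq0 (R : realFieldType) (b c : R) :
  (forall t, 0 <= t * b + t ^+ 2 * c) -> b = 0.
Proof.
move=> ge0_quad; set u := `|c| + 1.
have u_gt0 : 0 < u by rewrite ltr_wpDl.
have c_lt_u : c < u by rewrite /u ltr_pwDr // ler_norm.
have := ge0_quad (- b / u).
have -> : - b / u * b + (- b / u) ^+ 2 * c = b ^+ 2 * (c - u) / u ^+ 2.
  by field; rewrite gt_eqF.
rewrite pmulr_lge0 ?invr_gt0 ?exprn_gt0 // => ge0_b2.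
have : b ^+ 2 <= 0 by nra.
by rewrite le_eqVlt ltNge sqr_ge0 orbF sqrf_eq0 => /eqP.
Qed.

Lemma psd_graph_form_mderiv_eq0 (R : realType) (n : nat) (lt : rel 'I_n) (h : 'I_n -> R) :
  psd (graph_form R lt) -> (graph_form R lt).@[h] = 0 ->
  forall m, ((graph_form R lt)^`M(m)).@[h] = 0.
Proof.
move=> psd_f f_h0 m; apply: (@quadratic_ge0_linear_coef_eq0 _ _ (graph_form R lt).@[deltav R m]) => t.
by have := psd_f (fun i => h i + t * deltav R m i); rewrite meval_graph_form_shift f_h0 add0r.
Qed.

Section Pushforward.
Variables (R : comNzRingType) (T S : finType) (g : T -> S) (w : T -> R).

Definition push (s : S) : R := \sum_(a | g a == s) w a.

Lemma sum_push_mul (P : pred S) (F : S -> R) :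
  \sum_(s | P s) push s * F s = \sum_(a | P (g a)) w a * F (g a).
Proof.
rewrite (partition_big g P) //; apply: eq_bigr => s Ps.
rewrite mulr_suml; apply: eq_big => [a|a /eqP-> //].
by case: eqP => [->|]; rewrite ?Ps ?andbF.
Qed.

Lemma sum_push : \sum_s push s = \sum_a w a.
Proof. by rewrite (partition_big g xpredT) //; apply: eq_bigr => s _. Qed.

Lemma push_inj (a : T) : injective g -> push (g a) = w a.
Proof. by move=> g_inj; rewrite /push (big_pred1 a) // => b; rewrite inj_eq. Qed.

End Pushforward.

Lemma meval_fS_push (R : realType) (d : Order.disp_t) (S : finPOrderType d) (T : finType)
    (g : T -> S) (w : T -> R) : injective g ->
  (fS R S).@[fun i => push g w (enum_val i)] =
  \sum_a w a ^+ 2 + \sum_a \sum_(b | (g a < g b)%O) w a * w b.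
Proof.
move=> g_inj; rewrite meval_graph_form.
under [X in _ + X]eq_bigr => i _ do rewrite -(big_enum_val_cond (fun s => (enum_val i < s)%O)
                                   (fun s => push g w (enum_val i) * push g w s)).
rewrite -(big_enum_val (fun s => push g w s ^+ 2))
        -(big_enum_val (fun s => \sum_(t in xpredT | (s < t)%O) push g w s * push g w t)) /=.
under eq_bigr do rewrite expr2.
under [X in _ + X]eq_bigr do rewrite -mulr_sumr.
rewrite !sum_push_mul; congr (_ + _); apply: eq_big => // a _.
  by rewrite push_inj // expr2.
rewrite mulr_sumr; under [LHS]eq_bigr do rewrite mulrC.
by rewrite sum_push_mul; under eq_bigr do rewrite mulrC.
Qed.

Lemma ordS_neq (k : nat) (i : 'I_k) : (1 < k)%N -> ordS i != i.
Proof.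
move=> k_gt1; apply/eqP => /(congr1 val) /=.
have [lt_ik|le_ki] := ltnP i.+1 k; first by rewrite modn_small // => /esym/n_Sn.
have ik : i.+1 = k by apply/eqP; rewrite eqn_leq ltn_ord.
by rewrite ik modnn => i0; rewrite -ik -i0 in k_gt1.
Qed.

Lemma sumr_pair_bool (R : nzRingType) (I : finType) (F : I * bool -> R) :
  \sum_p F p = \sum_i (F (i, false) + F (i, true)).
Proof.
transitivity (\sum_i \sum_(b : bool) F (i, b)); last first.
  by apply: eq_bigr => i _; rewrite big_bool addrC.
by rewrite pair_big; apply: eq_big => // -[].
Qed.

Section Crown.
Variables (R : nzRingType) (k : nat).

Definition W_sign (a : 'I_k * bool) : R := if a.2 then -1 else 1.

Lemma W_lt_minus (i : 'I_k) : W_lt (i, false) =1 pred2 (i, true) (ordS i, true).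
Proof. by case=> j [] /=; rewrite /W_lt /= !xpair_eqE /= ?andbT ?andbF. Qed.

Lemma W_sign_form_eq0 : (1 < k)%N ->
  \sum_a W_sign a ^+ 2 + \sum_a \sum_(b | W_lt a b) W_sign a * W_sign b = 0.
Proof.
move=> k_gt1; rewrite !sumr_pair_bool -big_split big1 // => i _ /=.
rewrite [\sum_(b | W_lt (i, true) b) _]big_pred0 // (eq_bigl _ _ (W_lt_minus i)).
rewrite (eq_bigr (fun _ => -1)); last by move=> b /pred2P[]->; rewrite mul1r.
rewrite sumr_const card2 xpair_eqE andbT eq_sym ordS_neq // /W_sign /=.
by rewrite sqrrN !expr1n addr0 mulNrn mulr2n addrN.
Qed.

Lemma sum_W_sign : \sum_a W_sign a = 0.
Proof. by rewrite sumr_pair_bool big1 // => i _; rewrite /W_sign /= addrN. Qed.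

End Crown.

Arguments W_sign {R k}.

Theorem lemma10 (R : realType) (d : Order.disp_t) (S : finPOrderType d) (k : nat) :
  (2 <= k)%N -> contains_W S k -> psd (fS R S) ->
  exists h : 'I_#|S| -> R, inC (fS R S) h.
Proof.
move=> k_ge2 [g [g_inj g_lt]] psd_f.
pose h (i : 'I_#|S|) : R := push g W_sign (enum_val i).
have f_h0 : (fS R S).@[h] = 0.
  rewrite meval_fS_push //; under [X in _ + X]eq_bigr => a _ do rewrite (eq_bigl _ _ (g_lt a)).
  exact: W_sign_form_eq0.
exists h; split.
- by rewrite /inH -(big_enum_val (push g W_sign)) sum_push sum_W_sign.
- exists (enum_rank (g (Ordinal (ltnW k_ge2), false))).
  by rewrite /h enum_rankK push_inj // oner_neq0.
- by left => m; rewrite psd_graph_form_mderiv_eq0.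
Qed.
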